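(* Let $d\ge2$ and $\overrightarrow{w}\in(0,\infty)^d$ with $w_1=\max\{w_1,\dots,w_d\}$ and $2w_1>\sum_{i=1}^dw_i$. Then for every random vector $\overrightarrow{U}=(U_1,\dots,U_d)$ with uniform$[0,1]$ marginals, $$l(\overrightarrow{w})\le\mathrm{Var}\left(\sum_{i=1}^dw_iU_i\right),$$ with equality if and only if $\overrightarrow{U}$ is $\overrightarrow{w^*}$-CM. Moreover, there exists such a $\overrightarrow{U}$ attaining equality.
   Context: A random vector $\overrightarrow{U}=(U_1,\dots,U_d)$ with each $U_i$ uniform on $[0,1]$ is $\overrightarrow{v}$-CM (for $\overrightarrow{v}\in(0,\infty)^d$) if $P\left(\sum_{i=1}^d v_iU_i=\frac12\sum_{i=1}^d v_i\right)=1$. For $\overrightarrow{w}\in(0,\infty)^d$, define $\overrightarrow{w^*}=(w_1^*,\dots,w_d^* )$ by $w_i^*=w_i$ if $2w_i\le\sum_{j=1}^dw_j$ and $w_i^*=\sum_{j=1}^dw_j-w_i$ if $2w_i>\sum_{j=1}^dw_j$; and define $l(\overrightarrow{w})=\frac1{12}\left[\left(2\max\{w_1,\dots,w_d\}-\sum_{i=1}^dw_i\right)_+\right]^2$, where $x_+=\max\{x,0\}$. *)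

From HB Require Import structures.
From mathcomp Require Import all_boot all_order all_algebra.
From mathcomp Require Import all_classical all_reals all_analysis.
Set Implicit Arguments. Unset Strict Implicit. Unset Printing Implicit Defensive.
Import Order.TTheory GRing.Theory Num.Theory.
Local Open Scope ring_scope.
Local Open Scope classical_set_scope.

Definition wsum (R : realType) (d : nat) (w : 'I_d -> R) : R := \sum_(i < d) w i.

(* max{w_1,...,w_d}; for d >= 1 and positive weights this is the maximum
   (0 is a neutral starting value since all weights are positive) *)
Definition wmax (R : realType) (d : nat) (w : 'I_d -> R) : R :=
  \big[Num.max/0]_(i < d) w i.

Definition wstar (R : realType) (d : nat) (w : 'I_d -> R) : 'I_d -> R :=
  fun i => if 2 * w i <= wsum w then w i else wsum w - w i.

Definition lw (R : realType) (d : nat) (w : 'I_d -> R) : R :=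
  12^-1 * (Num.max (2 * wmax w - wsum w) 0) ^+ 2.

Definition uniform01_marginal (dT : measure_display) (T : measurableType dT)
    (R : realType) (P : probability T R) (X : {RV P >-> R}) : Prop :=
  forall A : set R, measurable A ->
    distribution P X A = uniform_prob (@ltr01 R) A.

Definition wcomb (dT : measure_display) (T : measurableType dT)
    (R : realType) (P : probability T R) (d : nat)
    (v : 'I_d -> R) (U : 'I_d -> {RV P >-> R}) : T -> R :=
  fun t => \sum_(i < d) v i * U i t.

Definition is_CM (dT : measure_display) (T : measurableType dT)
    (R : realType) (P : probability T R) (d : nat)
    (v : 'I_d -> R) (U : 'I_d -> {RV P >-> R}) : Prop :=
  P [set t | wcomb v U t = 2^-1 * wsum v] = 1%E.

(* Put c := 2 w_1 - sum_i w_i > 0.  As w*_1 = sum_(j <> 1) w_j and w*_j = w_j for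
   j <> 1, we have sum_i w_i U_i = c U_1 + Z with Z := sum_i w*_i U_i, hence
     Var (sum_i w_i U_i) = c^2/12 + Var Z + 2 c Cov (U_1, Z),   c^2/12 = l(w).
   Uniform marginals give Cov (U_1, U_j) >= -1/12 (from Var (U_1 + U_j) >= 0), so
   Cov (U_1, Z) >= w*_1/12 - sum_(j <> 1) w_j/12 = 0 and the bound follows.
   Equality forces Var Z = 0, i.e. Z = E Z = (sum_i w*_i)/2 almost surely, which is
   the w*-CM condition; conversely Var Z = 0 kills Cov (U_1, Z) by Cauchy-Schwarz.
   The bound is attained by U_1 = V and U_j = 1 - V (j <> 1) for V uniform. *)

From HB Require Import structures.
From mathcomp Require Import all_boot all_order all_algebra.
From mathcomp Require Import all_classical all_reals all_analysis.
From mathcomp Require Import ess_sup_inf measurable_realfun.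
From mathcomp Require Import ring lra.
Import Order.TTheory GRing.Theory Num.Theory.
Import numFieldNormedType.Exports.
Local Open Scope ring_scope.
Local Open Scope classical_set_scope.
Set Implicit Arguments. Unset Strict Implicit.

Section uniform01.
Context dT (T : measurableType dT) (R : realType) (P : probability T R)
  (X : {RV P >-> R}) (hX : uniform01_marginal X).

Lemma uniform01_ae_itv : \forall t \ae P, 0 <= X t <= 1.
Proof.
have m01 : measurable (`[0%R, 1%R] : set R) by exact: measurable_itv.
have out01 : uniform_prob (@ltr01 R) (~` `[0%R, 1%R]) = 0%E.
  by rewrite /uniform_prob integral_uniform_pdf setICl integral_set0.
exists (X @^-1` (~` `[0%R, 1%R])); split.
- exact/measurable_funPTI/measurableC.
- by have := hX (measurableC m01); rewrite out01.
- by move=> t /= Xt; apply: contra_not Xt; rewrite /= in_itv.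
Qed.

Lemma uniform01_Lfun2 : (X : T -> R) \in Lfun P 2%:E.
Proof.
have Xoo : (X : T -> R) \in Lfun P +oo%E.
  rewrite inE; apply/andP; split; first by rewrite inE; exact: measurable_funP.
  rewrite inE /= /finite_norm unlock /Lnorm; case: ifPn => // _.
  apply: (@le_lt_trans _ _ 1%:E); last exact: ltry.
  apply/ess_supP; apply: filterS uniform01_ae_itv => t /andP[t0 t1] /=.
  by rewrite lee_fin ger0_norm.
apply: (@Lfun_subset _ _ _ P 2%:E +oo%E) => //; rewrite ?leey ?lee1n //.
exact: fin_num_measure.
Qed.

(* The n-th moment is the Beta integral B(n+1, 1). *)
Lemma uniform01_integral_pow n : (\int[P]_t ((X t) ^+ n)%:E = (n.+1%:R^-1)%:E)%E.
Proof.
have m01 : measurable (`[0%R, 1%R] : set R) by exact: measurable_itv.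
pose f : R -> R := @XMonemX R n 0 \_ `[0%R, 1%R].
have f_ge0 x : 0 <= f x.
  rewrite /f patchE; case: ifPn => // x01.
  by apply: XMonemX_ge0; move: x01; rewrite inE.
have mf : measurable_fun [set: R] (EFin \o f).
  by apply/measurable_EFinP/(measurable_restrictT _ m01); exact: measurable_XMonemX.
transitivity (\int[P]_t (f (X t))%:E)%E.
  apply: ae_eq_integral => //.
  - exact/measurable_EFinP/measurable_funX.
  - exact: (measurableT_comp mf).
  - apply: filterS uniform01_ae_itv => t /andP[t0 t1] _.
    rewrite /f patchE ifT ?XMonemXn0 //.
    by apply/mem_set; rewrite /= in_itv /= t0 t1.
pose phi : T -> measurableTypeR R := X.
have mphi : measurable_fun [set: T] phi.
  by move=> _ Y mY; exact: (measurable_funP X measurableT).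
transitivity (\int[pushforward P phi]_y (f y)%:E)%E.
  by rewrite ge0_integral_pushforward // => y _; rewrite lee_fin.
transitivity (\int[uniform_prob (@ltr01 R)]_y (f y)%:E)%E.
  by apply: eq_measure_integral => A mA _; exact: hX.
rewrite integral_uniform // subr0 invr1 mul1e integral_mkcond.
transitivity ((@beta_fun R n.+1 1)%:E); last first.
  rewrite beta_fun_fact addn0 fact0 muln1 factS natrM; congr EFin.
  have n0 : (n`!%:R : R) != 0 by rewrite pnatr_eq0 -lt0n fact_gt0.
  by rewrite invfM mulrCA divff // mulr1.
rewrite EFin_beta_fun; apply: eq_integral => x _ /=.
by rewrite /f !patchE; case: ifPn => // ->.
Qed.

Lemma expectation_uniform01 : ('E_P[X] = (2^-1)%:E)%E.
Proof.
rewrite expectation_def -(uniform01_integral_pow 1).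
by apply: eq_integral => t _; rewrite expr1.
Qed.

Lemma variance_uniform01 : ('V_P[X] = (12^-1)%:E)%E.
Proof.
have EX2 : ('E_P[X ^+ 2] = (3^-1)%:E)%E.
  by rewrite unlock -(uniform01_integral_pow 2); apply: eq_integral.
rewrite varianceE ?uniform01_Lfun2 // EX2 expectation_uniform01.
by rewrite -EFin_expe -EFinB; congr EFin; field.
Qed.

End uniform01.

Section square_integrable.
Context dT (T : measurableType dT) (R : realType) (P : probability T R).
Local Open Scope ereal_scope.

Let Pfin : P setT \is a fin_num := fin_num_measure P _ measurableT.

Lemma covariance_sumr (I : Type) (r : seq I) (Y : T -> R) (F : I -> T -> R) :
  Y \in Lfun P 2%:E -> (forall i, F i \in Lfun P 2%:E) ->
  covariance P Y (\sum_(i <- r) F i)%R = \sum_(i <- r) covariance P Y (F i).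
Proof.
move=> Y2 F2; elim: r => [|i r IHr]; first by rewrite !big_nil; exact: covariance_cst_r.
have S2 : (\sum_(j <- r) F j)%R \in Lfun P 2%:E.
  by apply: rpred_sum => [|h j _]; [rewrite lee1n | exact: F2].
by rewrite !big_cons covarianceDr ?IHr.
Qed.

Lemma covariance_ge_oppr (X Y : T -> R) (v : R) :
  X \in Lfun P 2%:E -> Y \in Lfun P 2%:E ->
  'V_P[X] = v%:E -> 'V_P[Y] = v%:E -> (- v)%:E <= covariance P X Y.
Proof.
move=> X2 Y2 VX VY.
have := variance_ge0 P (X \+ Y)%R; rewrite varianceD // VX VY.
rewrite -(fineK (covariance_fin_num (Lfun_subset12 Pfin X2) (Lfun_subset12 Pfin Y2)
  (Lfun2_mul_Lfun1 X2 Y2))).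
by rewrite -EFinM -!EFinD !lee_fin; lra.
Qed.

Lemma variance_eq0P (Z : T -> R) (m : R) : Z \in Lfun P 2%:E ->
  'E_P[Z] = m%:E -> ('V_P[Z] = 0 <-> P [set t | Z t = m] = 1).
Proof.
move=> Z2 EZ.
have mZ : measurable_fun [set: T] Z by move: Z2; rewrite inE => /andP[]; rewrite inE.
have mS : measurable [set t | Z t = m].
  by rewrite -[X in measurable X]setTI; exact: (mZ measurableT _ (measurable_set1 m)).
have mSC : measurable (~` [set t | Z t = m]) by exact: measurableC.
have mg : measurable_fun [set: T] (fun t => (((Z \- cst m) * (Z \- cst m)) t)%:E).
  by apply/measurable_EFinP; apply: measurable_funM; exact: measurable_funB.
have -> : P [set t | Z t = m] = 1 <-> P (~` [set t | Z t = m]) = 0.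
  rewrite probability_setC //; split => [->|]; first by rewrite subee.
  rewrite -(fineK (fin_num_measure P _ mS)) -EFinB => /eqP.
  by rewrite eqe subr_eq0 => /eqP <-.
rewrite /variance unlock EZ /= unlock; split => [V0|PC0].
- have : \int[P]_(t in [set: T]) `|(((Z \- cst m) * (Z \- cst m)) t)%:E| = 0.
    rewrite -V0; apply: eq_integral => t _ /=.
    by rewrite ger0_norm // -expr2 sqr_ge0.
  move/(ae_eq_integral_abs _ measurableT mg) => [N [mN PN sub]].
  apply: (subset_measure0 (B := N)) => // t /= Zt; apply: sub => /=.
  by move=> /(_ I) /eqP; rewrite eqe /= mulf_eq0 orbb subr_eq0 => /eqP.
- rewrite (ae_eq_integral (cst 0)) ?integral0 //.
  exists (~` [set t | Z t = m]); split => // t /= nP0 Zt; apply: nP0 => _ /=.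
  by rewrite [X in X%:E](_ : _ = (Z t - m) * (Z t - m))%R // Zt subrr mulr0.
Qed.

End square_integrable.

Section weights.
Context (R : realType) (d : nat) (w : 'I_d -> R) (i0 : 'I_d)
  (hpos : forall i, 0 < w i) (hi0 : forall i, w i <= w i0)
  (hbig : wsum w < 2 * w i0).

Lemma wsum_bigD1 : wsum w = w i0 + \sum_(j < d | j != i0) w j.
Proof. by rewrite /wsum (bigD1 i0). Qed.

Lemma wstar_max : wstar w i0 = wsum w - w i0.
Proof. by rewrite /wstar ifN // -ltNge. Qed.

Lemma wstar_neq j : j != i0 -> wstar w j = w j.
Proof.
move=> ji0; rewrite /wstar ifT //.
have : w i0 + w j <= wsum w.
  rewrite wsum_bigD1 lerD2l (bigD1 j) //= lerDl.
  by apply: sumr_ge0 => k _; exact: ltW.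
by have := hi0 j; lra.
Qed.

Lemma wsum_wstar : wsum (wstar w) = 2 * (wsum w - w i0).
Proof.
rewrite {1}/wsum (bigD1 i0) //= wstar_max (eq_bigr w); last first.
  by move=> j; exact: wstar_neq.
by have := wsum_bigD1; lra.
Qed.

Lemma wmax_eq : wmax w = w i0.
Proof.
apply/le_anti/andP; split; last by rewrite /wmax (bigD1 i0) //= le_max lexx.
rewrite /wmax; elim/big_ind: _ => // [|x y hx hy]; first exact: ltW.
by rewrite ge_max hx hy.
Qed.

Lemma lw_eq : lw w = 12^-1 * (2 * w i0 - wsum w) ^+ 2.
Proof. by rewrite /lw wmax_eq max_l // ltW // subr_gt0. Qed.

Lemma sum_mul_wstar (x : 'I_d -> R) :
  \sum_(i < d) w i * x i =
  (2 * w i0 - wsum w) * x i0 + \sum_(i < d) wstar w i * x i.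
Proof.
rewrite (bigD1 i0) //= [X in _ = _ + X](bigD1 i0) //= wstar_max.
rewrite [X in _ = _ + (_ + X)](eq_bigr (fun i => w i * x i)); last first.
  by move=> j ji0; rewrite wstar_neq.
ring.
Qed.

(* The mass [wstar w i0 = sum_(j != i0) w j] exactly compensates the worst
   case [C j = - v] of the other coefficients. *)
Lemma sum_wstar_mul_ge0 (C : 'I_d -> R) (v : R) :
  C i0 = v -> (forall j, - v <= C j) -> 0 <= \sum_(j < d) wstar w j * C j.
Proof.
move=> Ci0 Cge; rewrite (bigD1 i0) //= wstar_max Ci0.
rewrite (eq_bigr (fun j => w j * C j)); last by move=> j ji0; rewrite wstar_neq.
have : \sum_(j < d | j != i0) w j * - v <= \sum_(j < d | j != i0) w j * C j.
  by apply: ler_sum => j _; apply: ler_wpM2l; [exact: ltW | exact: Cge].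
rewrite -mulr_suml; have := wsum_bigD1.
set S := \sum_(j < d | j != i0) w j; set SC := \sum_(j < d | j != i0) w j * C j.
move=> ->; rewrite mulrN (addrC (w i0)) addrK; lra.
Qed.

End weights.

Section weighted_uniform_sum.
Context dT (T : measurableType dT) (R : realType) (P : probability T R) (d : nat)
  (U : 'I_d -> {RV P >-> R}) (hU : forall i, uniform01_marginal (U i)).
Local Open Scope ereal_scope.

Let U2 i : (U i : T -> R) \in Lfun P 2%:E := uniform01_Lfun2 (hU i).

Lemma wcombE (v : 'I_d -> R) : wcomb v U = (\sum_(i < d) (v i \o* (U i : T -> R)))%R.
Proof. by rewrite fct_sumE; apply/funext => t; apply: eq_bigr => i _; rewrite mulrC. Qed.

Lemma wcomb_Lfun2 (v : 'I_d -> R) : wcomb v U \in Lfun P 2%:E.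
Proof.
rewrite wcombE; apply: rpred_sum => [|h i _]; first by rewrite lee1n.
by apply: Lfun_scale => //; rewrite ler1n.
Qed.

Lemma expectation_wcomb (v : 'I_d -> R) : 'E_P[wcomb v U] = (2^-1 * wsum v)%:E.
Proof.
have Pfin : P setT \is a fin_num := fin_num_measure P _ measurableT.
have U1 i : (U i : T -> R) \in Lfun P 1 := Lfun_subset12 Pfin (U2 i).
rewrite wcombE.
rewrite (_ : 'E_P[_] = \sum_(i < d) 'E_P[v i \o* (U i : T -> R)]); last first.
  have := @expectation_sum _ _ _ P (map (fun i => v i \o* (U i : T -> R)) (index_enum 'I_d)).
  by rewrite !big_map; apply => _ /mapP[i _ ->]; rewrite Lfun_scale.
rewrite (eq_bigr (fun i => (v i * 2^-1)%:E)) => [|i _]; last first.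
  by rewrite expectationZl // expectation_uniform01.
rewrite sumEFin /wsum mulr_sumr; congr EFin; apply: eq_bigr => i _; exact: mulrC.
Qed.

Lemma is_CM_variance_eq0 (v : 'I_d -> R) : is_CM v U <-> 'V_P[wcomb v U] = 0.
Proof. by rewrite (variance_eq0P (wcomb_Lfun2 v) (expectation_wcomb v)). Qed.

End weighted_uniform_sum.

Section lower_bound.
Context (R : realType) (d : nat) (w : 'I_d -> R) (i0 : 'I_d)
  (hpos : forall i, 0 < w i) (hi0 : forall i, w i <= w i0)
  (hbig : wsum w < 2 * w i0)
  dT (T : measurableType dT) (P : probability T R) (U : 'I_d -> {RV P >-> R})
  (hU : forall i, uniform01_marginal (U i)).

Let Pfin : P setT \is a fin_num := fin_num_measure P _ measurableT.
Let U2 i : (U i : T -> R) \in Lfun P 2%:E := uniform01_Lfun2 (hU i).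
Let U1 i : (U i : T -> R) \in Lfun P 1 := Lfun_subset12 Pfin (U2 i).
Let Z := wcomb (wstar w) U.
Let Z2 : Z \in Lfun P 2%:E := wcomb_Lfun2 hU (wstar w).
Let Z1 : Z \in Lfun P 1 := Lfun_subset12 Pfin Z2.

Lemma variance_wcomb_split :
  'V_P[wcomb w U] = ((lw w)%:E + 'V_P[Z] +
    (2 * (2 * w i0 - wsum w))%:E * covariance P (U i0) Z)%E.
Proof.
set c := 2 * w i0 - wsum w.
have -> : wcomb w U = (c \o* (U i0 : T -> R) \+ Z)%R.
  by apply/funext => t; rewrite /wcomb (sum_mul_wstar hpos hi0 hbig) [c * _]mulrC.
rewrite varianceD ?Lfun_scale ?ler1n // varianceZ // variance_uniform01 //.
rewrite (lw_eq hpos hi0 hbig) -/c covarianceZl ?Lfun2_mul_Lfun1 //.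
by rewrite -EFinM (mulrC (c ^+ 2)) muleA -EFinM.
Qed.

Lemma covariance_wcomb_wstar_ge0 : (0 <= covariance P (U i0) Z)%E.
Proof.
pose C j := fine (covariance P (U i0) (U j)).
have CE j : covariance P (U i0) (U j) = (C j)%:E.
  by rewrite fineK // covariance_fin_num ?Lfun2_mul_Lfun1.
rewrite /Z wcombE covariance_sumr => [|//|i]; last by rewrite Lfun_scale ?ler1n.
rewrite (eq_bigr (fun j => (wstar w j * C j)%:E)) => [|j _]; last first.
  by rewrite covarianceZr ?Lfun2_mul_Lfun1 // CE -EFinM.
rewrite sumEFin lee_fin; apply: (sum_wstar_mul_ge0 hpos hi0 hbig (v := 12^-1)).
- by rewrite /C; have := variance_uniform01 (hU i0); rewrite /variance => ->.
- move=> j; rewrite -lee_fin -CE.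
  by apply: covariance_ge_oppr; rewrite ?variance_uniform01.
Qed.

Lemma variance_wcomb_ge_lw :
  ((lw w)%:E <= 'V_P[wcomb w U])%E /\
  ((lw w)%:E = 'V_P[wcomb w U] <-> is_CM (wstar w) U).
Proof.
have c0 : 0 < 2 * w i0 - wsum w by rewrite subr_gt0.
set vz := fine 'V_P[Z]; set k := fine (covariance P (U i0) Z).
have VZ : 'V_P[Z] = vz%:E by rewrite /vz fineK ?variance_fin_num.
have CZ : covariance P (U i0) Z = k%:E.
  by rewrite /k fineK // covariance_fin_num ?Lfun2_mul_Lfun1.
have vz0 : 0 <= vz by rewrite -lee_fin -VZ variance_ge0.
have k0 : 0 <= k by rewrite -lee_fin -CZ covariance_wcomb_wstar_ge0.
have ck0 : 0 <= 2 * (2 * w i0 - wsum w) * k by rewrite !mulr_ge0 // ltW.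
have k_eq0 : vz = 0 -> k = 0.
  move=> vz_eq0; apply/le_anti; rewrite k0 andbT -lee_fin -CZ.
  by rewrite (le_trans (covariance_le _ _)) // VZ vz_eq0 sqrte0 mule0.
rewrite (is_CM_variance_eq0 hU) variance_wcomb_split VZ CZ -EFinM -!EFinD lee_fin.
split; first lra.
split => [eqV|[vz_eq0]]; first by have -> : vz = 0 by have := EFin_inj eqV; lra.
by congr EFin; rewrite k_eq0 // vz_eq0; lra.
Qed.

End lower_bound.

Section onem.
Context (R : realType).
Local Open Scope ereal_scope.

Definition idR (x : measurableTypeR R) : R := x.
Definition onemR (x : measurableTypeR R) : R := 1 - x.

Lemma measurable_idR : measurable_fun [set: measurableTypeR R] idR.
Proof. by move=> _ Y mY; rewrite setTI. Qed.

Lemma measurable_onemR : measurable_fun [set: measurableTypeR R] onemR.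
Proof. by apply: measurable_funB => //; exact: measurable_idR. Qed.

HB.instance Definition _ := isMeasurableFun.Build _ _ _ _ idR measurable_idR.
HB.instance Definition _ := isMeasurableFun.Build _ _ _ _ onemR measurable_onemR.

Lemma lebesgue_measure_onem (A : set R) : measurable A ->
  pushforward lebesgue_measure (onemR : _ -> measurableTypeR R) A = lebesgue_measure A.
Proof.
move=> mA; apply/esym/lebesgue_measure_unique => //= [|_ _ [[a b]] _ <-].
  exact: measurable_onemR.
rewrite /pushforward.
have -> : onemR @^-1` `]a, b] = `[(1 - b)%R, (1 - a)%R[%classic.
  apply/seteqP; split => x /=; rewrite /onemR !in_itv /=.
  - by move=> /andP[? ?]; apply/andP; split; lra.
  - by move=> /andP[? ?]; apply/andP; split; lra.
rewrite !lebesgue_measure_itv /= !lte_fin ltrD2l ltrN2.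
by case: ifP => // _; rewrite -!EFinD; congr EFin; ring.
Qed.

Lemma uniform_prob_onem (A : set R) : measurable A ->
  uniform_prob (@ltr01 R) (onemR @^-1` A) = uniform_prob (@ltr01 R) A.
Proof.
move=> mA; rewrite /uniform_prob.
transitivity (\int[lebesgue_measure]_(x in onemR @^-1` A)
   ((fun y => (uniform_pdf 0 1 y)%:E) \o (onemR : _ -> measurableTypeR R)) x).
  apply: eq_integral => x _ /=; congr EFin; rewrite /uniform_pdf /onemR.
  have -> : (0 <= 1 - x <= 1)%R = (0 <= x <= 1)%R.
    by apply/idP/idP => /andP[? ?]; apply/andP; split; lra.
  by [].
rewrite -(ge0_integral_pushforward (phi := onemR : _ -> measurableTypeR R) measurable_onemR) //.
- apply: eq_measure_integral => [|mo B mB _]; first exact: measurable_onemR.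
  exact: lebesgue_measure_onem.
- apply/measurable_EFinP; apply: measurable_funTS; exact: measurable_uniform_pdf.
- by move=> y _; rewrite lee_fin uniform_pdf_ge0.
Qed.

End onem.

Section countermonotone.
Context (R : realType).

Definition countermonotone (d : nat) (i0 : 'I_d) :
    'I_d -> {RV uniform_prob (@ltr01 R) >-> R} :=
  fun i => if i == i0 then [the {mfun _ >-> R} of @idR R]
           else [the {mfun _ >-> R} of @onemR R].

Lemma countermonotone_uniform01 d (i0 i : 'I_d) :
  uniform01_marginal (countermonotone i0 i).
Proof. by move=> A mA; rewrite /countermonotone; case: ifP => _ //=; exact: uniform_prob_onem. Qed.

Lemma countermonotone_is_CM d (w : 'I_d -> R) (i0 : 'I_d)
  (hpos : forall i, 0 < w i) (hi0 : forall i, w i <= w i0)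
  (hbig : wsum w < 2 * w i0) :
  is_CM (wstar w) (countermonotone i0).
Proof.
rewrite /is_CM -[RHS](@probability_setT _ _ _ (uniform_prob (@ltr01 R))).
congr (uniform_prob _ _); apply/seteqP; split => // t _ /=.
rewrite (wsum_wstar hpos hi0 hbig) /wcomb (bigD1 i0) //= (wstar_max hbig).
rewrite /countermonotone eqxx (eq_bigr (fun j => w j * (1 - t))); last first.
  by move=> j ji0; rewrite (wstar_neq hpos hi0 ji0) ifN.
rewrite -mulr_suml (wsum_bigD1 w i0).
set S := \sum_(j < d | j != i0) w j.
by rewrite (addrC (w i0)) addrK /= /idR; field.
Qed.

End countermonotone.
Arguments countermonotone {R d}.

Theorem mainTheorem10 (R : realType) (d : nat) (w : 'I_d -> R)
  (hd : (2 <= d)%N)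
  (hpos : forall i, 0 < w i)
  (hmax : forall i j : 'I_d, nat_of_ord j = 0%N -> w i <= w j)
  (hbig : forall j : 'I_d, nat_of_ord j = 0%N -> 2 * w j > wsum w) :
  (forall (dT : measure_display) (T : measurableType dT)
          (P : probability T R) (U : 'I_d -> {RV P >-> R}),
      (forall i, uniform01_marginal (U i)) ->
      ((lw w)%:E <= 'V_P[wcomb w U])%E /\
      ((lw w)%:E = 'V_P[wcomb w U] <-> is_CM (wstar w) U)) /\
  (exists (dT : measure_display) (T : measurableType dT)
          (P : probability T R) (U : 'I_d -> {RV P >-> R}),
      (forall i, uniform01_marginal (U i)) /\
      (lw w)%:E = 'V_P[wcomb w U]).
Proof.
have d_gt0 : (0 < d)%N by exact: leq_trans hd.
pose i0 := Ordinal d_gt0.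
have hi0 i : w i <= w i0 by exact: hmax.
have hbig0 : wsum w < 2 * w i0 by exact: hbig.
split => [dT T P U hU|]; first exact: variance_wcomb_ge_lw.
exists _, (measurableTypeR R), (uniform_prob (@ltr01 R)), (countermonotone i0).
split => [i|]; first exact: countermonotone_uniform01.
apply/(variance_wcomb_ge_lw hpos hi0 hbig0 (countermonotone_uniform01 i0)).2.
exact: countermonotone_is_CM.
Qed.
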